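(* Fix $l^0_{jk},l^0_{ki},l^0_{ij}>0$ and let $\mathcal{W}^{ijk}$ be the set of $(w_i,w_j,w_k)\in\mathbb{R}^3$ for which $l_{ab}>0$ defined by $\cosh\frac{l_{ab}}{2}=e^{w_a+w_b}\cosh\frac{l^0_{ab}}{2}$ exist for $ab\in\{jk,ki,ij\}$. For $(w_i,w_j,w_k)\in\mathcal{W}^{ijk}$, let $\theta^i_{jk},\theta^j_{ki},\theta^k_{ij}$ be the lengths of the sides opposite to the sides of lengths $l_{jk},l_{ki},l_{ij}$ in the hyperbolic right-angled hexagon whose three pairwise non-adjacent sides have lengths $l_{jk},l_{ki},l_{ij}$. Then the Jacobian matrix $\frac{\partial(\theta^i_{jk},\theta^j_{ki},\theta^k_{ij})}{\partial(w_i,w_j,w_k)}$ is negative definite.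
   Context: For any three positive numbers there is a hyperbolic right-angled hexagon, unique up to isometry, whose three pairwise non-adjacent sides have these lengths. *)

From HB Require Import structures.
From mathcomp Require Import all_boot all_order all_algebra.
From mathcomp Require Import all_classical all_reals all_analysis.
Set Implicit Arguments. Unset Strict Implicit. Unset Printing Implicit Defensive.
Import Order.TTheory GRing.Theory Num.Theory.
Import numFieldNormedType.Exports.
Local Open Scope ring_scope.

Section Hyp.
Variable R : realType.

Definition cosh (x : R) : R := (expR x + expR (- x)) / 2.
Definition sinh (x : R) : R := (expR x - expR (- x)) / 2.
Definition acosh (x : R) : R := ln (x + Num.sqrt (x ^+ 2 - 1)).

(* Length of the side opposite to the side of length a in the hyperbolic
   right-angled hexagon whose three pairwise non-adjacent sides have lengths
   a, b, c (hyperbolic cosine law for right-angled hexagons). *)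
Definition hexagon_opp (a b c : R) : R :=
  acosh ((cosh b * cosh c + cosh a) / (sinh b * sinh c)).

Definition new_length (l0 wa wb : R) : R :=
  2 * acosh (expR (wa + wb) * cosh (l0 / 2)).

(* Index convention: coordinate 0 = i, 1 = j, 2 = k.
   l0jk, l0ki, l0ij are the initial lengths. *)
Definition W_ijk (l0jk l0ki l0ij : R) : set 'rV[R]_3 :=
  [set w | (exists l : R, 0 < l /\ cosh (l / 2) = expR (w 0 1 + w 0 2) * cosh (l0jk / 2)) /\
           (exists l : R, 0 < l /\ cosh (l / 2) = expR (w 0 2 + w 0 0) * cosh (l0ki / 2)) /\
           (exists l : R, 0 < l /\ cosh (l / 2) = expR (w 0 0 + w 0 1) * cosh (l0ij / 2))]%classic.

Definition theta_map (l0jk l0ki l0ij : R) (w : 'rV[R]_3) : 'rV[R]_3 :=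
  let ljk := new_length l0jk (w 0 1) (w 0 2) in
  let lki := new_length l0ki (w 0 2) (w 0 0) in
  let lij := new_length l0ij (w 0 0) (w 0 1) in
  \row_(a < 3) [:: hexagon_opp ljk lki lij;
                   hexagon_opp lki lij ljk;
                   hexagon_opp lij ljk lki]`_a.

Definition negative_definite n (A : 'M[R]_n) : Prop :=
  A^T = A /\ forall v : 'rV[R]_n, v != 0 -> (v *m A *m v^T) 0 0 < 0.

End Hyp.

(* Write x_a = cosh l_a for the three new edge lengths.  By the cosine law of
   right-angled hexagons, cosh theta_a = (x_b x_c + x_a) / (sinh l_b sinh l_c),
   and d l_a depends only on d(w_b + w_c).  The chain rule gives
     d theta_a = - 2 / sqrt D * (N dw)_a,   D = x_0^2 + x_1^2 + x_2^2 + 2 x_0 x_1 x_2 - 1,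
   for an explicit symmetric matrix N in the x_a; in the variables u_a = e^(l_a / 2)
   every step is rational, so these identities are checked by [field].  N is
   positive definite by Sylvester's criterion: with y_a = x_a - 1 > 0 its leading
   principal minors are polynomials with positive coefficients divided by
   y_0 y_1 y_2. *)

From mathcomp Require Import all_boot all_order all_algebra.
From mathcomp Require Import all_classical all_reals all_analysis.
From mathcomp Require Import ring lra.
Import Order.TTheory GRing.Theory Num.Theory.
Import numFieldNormedType.Exports.
Local Open Scope ring_scope.

Set Implicit Arguments. Unset Strict Implicit. Unset Printing Implicit Defensive.

Section PositiveQuadraticForm.
Variable R : realFieldType.

(* Sylvester's criterion for the matrix [[a, b, c], [b, d, e], [c, e, f]]. *)
Lemma sylvester3 (a b c d e f v0 v1 v2 : R) :
  0 < a -> 0 < a * d - b ^+ 2 ->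
  0 < a * (d * f - e ^+ 2) - b * (b * f - c * e) + c * (b * e - d * c) ->
  [|| v0 != 0, v1 != 0 | v2 != 0] ->
  0 < a * v0 ^+ 2 + d * v1 ^+ 2 + f * v2 ^+ 2
      + 2 * b * v0 * v1 + 2 * c * v0 * v2 + 2 * e * v1 * v2.
Proof.
move=> a_gt0 m_gt0 det_gt0 v_neq0.
set m := a * d - b ^+ 2.
set D := a * (d * f - e ^+ 2) - b * (b * f - c * e) + c * (b * e - d * c).
have am_gt0 : 0 < a * m by rewrite mulr_gt0.
rewrite -(pmulr_rgt0 _ am_gt0).
have -> : a * m * (a * v0 ^+ 2 + d * v1 ^+ 2 + f * v2 ^+ 2
      + 2 * b * v0 * v1 + 2 * c * v0 * v2 + 2 * e * v1 * v2)
    = m * (a * v0 + b * v1 + c * v2) ^+ 2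
      + (m * v1 + (a * e - b * c) * v2) ^+ 2 + a * D * v2 ^+ 2.
  by rewrite /m /D; ring.
have sqr_gt0 (x : R) : x != 0 -> 0 < x ^+ 2.
  by move=> x_neq0; rewrite lt_neqAle sqr_ge0 andbT eq_sym sqrf_eq0.
have [v2_eq0|v2_neq0] := eqVneq v2 0; last first.
  apply: ltr_wpDl; last by rewrite mulr_gt0 ?sqr_gt0 // mulr_gt0.
  by rewrite addr_ge0 ?sqr_ge0 // mulr_ge0 ?sqr_ge0 // ltW.
subst v2; rewrite !(mulr0, addr0, expr0n) /=.
have [v1_eq0|v1_neq0] := eqVneq v1 0; last first.
  apply: ltr_wpDl; first by rewrite mulr_ge0 ?sqr_ge0 // ltW.
  by rewrite sqr_gt0 // mulf_neq0 // gt_eqF.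
subst v1; move: v_neq0; rewrite !eqxx !orbF => v0_neq0.
rewrite !(mulr0, addr0) [0 ^+ _]expr2 mul0r addr0.
by rewrite mulr_gt0 // sqr_gt0 // mulf_neq0 // gt_eqF.
Qed.

End PositiveQuadraticForm.

Ltac pospoly := repeat (apply: addr_gt0 || apply: mulr_gt0 || apply: exprn_gt0);
  try done; try (by rewrite ltr0n).

Section HexagonForm.
Variable R : realFieldType.

(* The Jacobian of theta is [- 2 / sqrt (hex_disc x0 x1 x2)] times the symmetric
   matrix with diagonal entries [hex_diag] and off-diagonal entries [hex_off],
   whose rows are [hex_row] and whose quadratic form is [hex_form]. *)

Definition hex_disc (x0 x1 x2 : R) := x0 ^+ 2 + x1 ^+ 2 + x2 ^+ 2 + 2 * x0 * x1 * x2 - 1.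

Definition hex_diag (xa xb xc : R) :=
  (xc + xa * xb) / (xb - 1) + (xb + xa * xc) / (xc - 1).

Definition hex_off (xa xb xc : R) := (xa + xb - xc + 1) / (xc - 1).

Definition hex_row (xa xb xc va vb vc : R) :=
  hex_diag xa xb xc * va + hex_off xa xb xc * vb + hex_off xa xc xb * vc.

Definition hex_form (x0 x1 x2 v0 v1 v2 : R) :=
  v0 * hex_row x0 x1 x2 v0 v1 v2 + v1 * hex_row x1 x2 x0 v1 v2 v0
  + v2 * hex_row x2 x0 x1 v2 v0 v1.

Lemma hex_discC (x0 x1 x2 : R) : hex_disc x1 x2 x0 = hex_disc x0 x1 x2.
Proof. by rewrite /hex_disc; ring. Qed.

Lemma hex_offC (xa xb xc : R) : hex_off xb xa xc = hex_off xa xb xc.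
Proof. by rewrite /hex_off; congr (_ / _); ring. Qed.

Lemma hex_disc_gt0 (x0 x1 x2 : R) : 1 < x0 -> 1 < x1 -> 1 < x2 -> 0 < hex_disc x0 x1 x2.
Proof.
move=> x0_gt1 x1_gt1 x2_gt1.
have : 0 < x0 * x1 * x2 by rewrite !mulr_gt0 // (lt_trans ltr01).
rewrite /hex_disc; nra.
Qed.

Lemma hex_form_gt0 (x0 x1 x2 v0 v1 v2 : R) : 1 < x0 -> 1 < x1 -> 1 < x2 ->
  [|| v0 != 0, v1 != 0 | v2 != 0] -> 0 < hex_form x0 x1 x2 v0 v1 v2.
Proof.
rewrite -[x0](subrK 1) -[x1](subrK 1) -[x2](subrK 1) !ltrDr.
move: (x0 - 1) (x1 - 1) (x2 - 1) => y0 y1 y2 y0_gt0 y1_gt0 y2_gt0 v_neq0.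
have [y0_neq0 y1_neq0 y2_neq0] : [/\ y0 != 0, y1 != 0 & y2 != 0].
  by rewrite !gt_eqF.
set a := hex_diag (y0 + 1) (y1 + 1) (y2 + 1).
set b := hex_off (y0 + 1) (y1 + 1) (y2 + 1).
set c := hex_off (y0 + 1) (y2 + 1) (y1 + 1).
set d := hex_diag (y1 + 1) (y2 + 1) (y0 + 1).
set e := hex_off (y1 + 1) (y2 + 1) (y0 + 1).
set f := hex_diag (y2 + 1) (y0 + 1) (y1 + 1).
have -> : hex_form (y0 + 1) (y1 + 1) (y2 + 1) v0 v1 v2 =
    a * v0 ^+ 2 + d * v1 ^+ 2 + f * v2 ^+ 2
    + 2 * b * v0 * v1 + 2 * c * v0 * v2 + 2 * e * v1 * v2.
  rewrite /hex_form /hex_row -/a -/b -/c -/d -/e -/f.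
  rewrite [hex_off (y1 + 1) _ _]hex_offC [hex_off (y2 + 1) (y0 + 1) _]hex_offC.
  rewrite [hex_off (y2 + 1) _ _]hex_offC -/b -/c -/e; ring.
apply: sylvester3 => //.
- by rewrite /a /hex_diag !addrK; apply: addr_gt0; apply: divr_gt0; pospoly.
- have -> : a * d - b ^+ 2 =
      ((4%:R * y2) + (4%:R * y2^+2) + (y2^+3) + (4%:R * y1) + (8%:R * y1 * y2)
       + (3%:R * y1 * y2^+2) + (4%:R * y1^+2) + (3%:R * y1^+2 * y2) + (y1^+3) + (4%:R * y0)
       + (8%:R * y0 * y2) + (3%:R * y0 * y2^+2) + (16%:R * y0 * y1) + (14%:R * y0 * y1 * y2)
       + (4%:R * y0 * y1 * y2^+2) + (11%:R * y0 * y1^+2) + (6%:R * y0 * y1^+2 * y2)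
       + (2%:R * y0 * y1^+3) + (4%:R * y0^+2) + (3%:R * y0^+2 * y2) + (11%:R * y0^+2 * y1)
       + (6%:R * y0^+2 * y1 * y2) + (4%:R * y0^+2 * y1^+2) + (4%:R * y0^+2 * y1^+2 * y2)
       + (y0^+3) + (2%:R * y0^+3 * y1)) / (y0 * y1 * y2).
    rewrite /a /b /d /hex_diag /hex_off !addrK.
    by field; rewrite y0_neq0 y1_neq0 y2_neq0.
  by rewrite divr_gt0 //; pospoly.
- have -> : a * (d * f - e ^+ 2) - b * (b * f - c * e) + c * (b * e - d * c) =
      (32%:R + (64%:R * y2) + (48%:R * y2^+2) + (16%:R * y2^+3) + (2%:R * y2^+4)
       + (64%:R * y1) + (96%:R * y1 * y2) + (48%:R * y1 * y2^+2) + (8%:R * y1 * y2^+3)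
       + (48%:R * y1^+2) + (48%:R * y1^+2 * y2) + (12%:R * y1^+2 * y2^+2) + (16%:R * y1^+3)
       + (8%:R * y1^+3 * y2) + (2%:R * y1^+4) + (64%:R * y0) + (96%:R * y0 * y2)
       + (48%:R * y0 * y2^+2) + (8%:R * y0 * y2^+3) + (96%:R * y0 * y1)
       + (128%:R * y0 * y1 * y2) + (56%:R * y0 * y1 * y2^+2) + (8%:R * y0 * y1 * y2^+3)
       + (48%:R * y0 * y1^+2) + (56%:R * y0 * y1^+2 * y2) + (16%:R * y0 * y1^+2 * y2^+2)
       + (8%:R * y0 * y1^+3) + (8%:R * y0 * y1^+3 * y2) + (48%:R * y0^+2)
       + (48%:R * y0^+2 * y2) + (12%:R * y0^+2 * y2^+2) + (48%:R * y0^+2 * y1)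
       + (56%:R * y0^+2 * y1 * y2) + (16%:R * y0^+2 * y1 * y2^+2) + (12%:R * y0^+2 * y1^+2)
       + (16%:R * y0^+2 * y1^+2 * y2) + (8%:R * y0^+2 * y1^+2 * y2^+2) + (16%:R * y0^+3)
       + (8%:R * y0^+3 * y2) + (8%:R * y0^+3 * y1) + (8%:R * y0^+3 * y1 * y2)
       + (2%:R * y0^+4)) / (y0 * y1 * y2).
    rewrite /a /b /c /d /e /f /hex_diag /hex_off !addrK.
    by field; rewrite y0_neq0 y1_neq0 y2_neq0.
  by rewrite divr_gt0 //; pospoly.
Qed.

End HexagonForm.

Section DeriveRules.
Variable R : realType.
Implicit Types (f g : R -> R) (t a b : R).

Lemma is_derive1D f g t a b : is_derive t 1 f a -> is_derive t 1 g b ->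
  is_derive t 1 (fun x => f x + g x) (a + b).
Proof. exact: is_deriveD. Qed.

Lemma is_derive1N f t a : is_derive t 1 f a -> is_derive t 1 (fun x => - f x) (- a).
Proof. exact: is_deriveN. Qed.

Lemma is_derive1M f g t a b : is_derive t 1 f a -> is_derive t 1 g b ->
  is_derive t 1 (fun x => f x * g x) (f t * b + g t * a).
Proof. exact: is_deriveM. Qed.

Lemma is_derive1V f t a : is_derive t 1 f a -> f t != 0 ->
  is_derive t 1 (fun x => (f x)^-1) (- a / f t ^+ 2).
Proof.
move=> df ft_neq0; apply: is_derive_eq (is_deriveV ft_neq0 df) _.
by rewrite [_ *: _]/(_ * _) mulrC mulrN -mulNr.
Qed.

Lemma is_derive1_chain f g t a b : is_derive (g t) 1 f a -> is_derive t 1 g b ->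
  is_derive t 1 (fun x => f (g x)) (a * b).
Proof. exact: is_derive1_comp. Qed.

Lemma is_derive_affine (a b t : R) : is_derive t 1 (fun h : R => h * a + b) a.
Proof.
have := is_derive1D (is_derive1M (is_derive_id t 1) (is_derive_cst a t 1))
  (is_derive_cst b t 1).
by move/is_derive_eq; apply; rewrite /=; ring.
Qed.

End DeriveRules.

Section Hyperbolic.
Variable R : realType.
Implicit Types (x z : R).

Lemma cosh_expRV x : cosh x = (expR x + (expR x)^-1) / 2.
Proof. by rewrite /cosh expRN. Qed.

Lemma sinh_expRV x : sinh x = (expR x - (expR x)^-1) / 2.
Proof. by rewrite /sinh expRN. Qed.

Lemma cosh_sinh_gt x : 0 < x -> [/\ 1 < cosh x, 0 < sinh x & sinh x < cosh x].
Proof.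
move=> x_gt0; rewrite cosh_expRV sinh_expRV.
have e_gt1 : 1 < expR x by exact: pexpR_gt1.
have e_gt0 : 0 < expR x by exact: expR_gt0.
have ei_gt0 : 0 < (expR x)^-1 by rewrite invr_gt0.
have ei_lt1 : (expR x)^-1 < 1 by rewrite invf_lt1.
have eV : expR x * (expR x)^-1 = 1 by rewrite mulfV // gt_eqF.
split; nra.
Qed.

Lemma is_derive_expRN x : is_derive x 1 (fun y : R => expR (- y)) (- expR (- x)).
Proof.
have dN : is_derive x 1 (fun y : R => - y) (- 1) := is_derive1N (is_derive_id x 1).
apply: is_derive_eq (@is_derive1_chain _ expR _ x _ _ (is_derive_expR (- x)) dN) _.
by rewrite mulrN1.
Qed.

Lemma is_derive_cosh x : is_derive x 1 (@cosh R) (sinh x).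
Proof.
have := is_derive1M (is_derive1D (is_derive_expR x) (is_derive_expRN x))
  (is_derive_cst (2^-1 : R) x 1).
by move/is_derive_eq; apply; rewrite /sinh /=; field.
Qed.

Lemma is_derive_sinh x : is_derive x 1 (@sinh R) (cosh x).
Proof.
have := is_derive1M (is_derive1D (is_derive_expR x) (is_derive1N (is_derive_expRN x)))
  (is_derive_cst (2^-1 : R) x 1).
by move/is_derive_eq; apply; rewrite /cosh /=; field.
Qed.

Lemma sqr_sub1_gt0 z : 1 < z -> 0 < z ^+ 2 - 1.
Proof. by move=> z_gt1; rewrite subr_gt0 -[1](expr1n _ 2) ltrXn2r // (lt_trans ltr01). Qed.

Lemma is_derive_acosh z : 1 < z ->
  is_derive z 1 (@acosh R) (Num.sqrt (z ^+ 2 - 1))^-1.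
Proof.
move=> z_gt1; have r2_gt0 := sqr_sub1_gt0 z_gt1.
set r := Num.sqrt _; have r_gt0 : 0 < r by rewrite sqrtr_gt0.
have dr2 := is_derive1D (is_derive1M (is_derive_id z 1) (is_derive_id z 1))
  (is_derive_cst (-1 : R) z 1).
have dr := @is_derive1_chain _ Num.sqrt _ z _ _ (is_derive1_sqrt r2_gt0) dr2.
have := @is_derive1_chain _ (@ln R) _ z _ _ (is_derive1_ln _)
  (is_derive1D (is_derive_id z 1) dr).
rewrite /= -expr2 -/r; move/(_ ltac:(lra))/is_derive_eq; apply.
by field; rewrite !gt_eqF //; lra.
Qed.

Lemma expR_acosh z : 1 < z -> let u := expR (acosh z) in
  [/\ 1 < u, z = (u + u^-1) / 2 & Num.sqrt (z ^+ 2 - 1) = (u - u^-1) / 2].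
Proof.
move=> z_gt1 u; have r2_gt0 := sqr_sub1_gt0 z_gt1.
set r := Num.sqrt _; have r_gt0 : 0 < r by rewrite sqrtr_gt0.
have rr : r ^+ 2 = z ^+ 2 - 1 by rewrite sqr_sqrtr // ltW.
have uE : u = z + r by rewrite /u /acosh -/r lnK // posrE; lra.
have u_neq0 : u != 0 by rewrite uE gt_eqF //; lra.
have uV : u^-1 = z - r.
  apply: (mulfI u_neq0); rewrite mulfV // uE.
  by transitivity (z ^+ 2 - r ^+ 2); [rewrite rr|]; ring.
by rewrite uV uE; split; [lra | field | field].
Qed.

End Hyperbolic.

Section EdgeLength.
Variable R : realType.
Implicit Types (u e l wa wb t : R) (p q : R -> R).

(* With [u = e^(l/2)], [cosh l = ch u] and [sinh l = sh u]. *)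
Definition ch u := (u ^+ 2 + (u ^+ 2)^-1) / 2.
Definition sh u := (u ^+ 2 - (u ^+ 2)^-1) / 2.

(* rate of change of [new_length] when [wa + wb] moves at speed [e] *)
Definition len_deriv u e := (u + u^-1) / (u - u^-1) * (2 * e).

(* the side conditions [field] generates for rational expressions in [u] *)
Lemma param_neq0 u : 1 < u ->
  [&& u != 0, u * u - 1 != 0, (u * u) ^+ 2 - 1 != 0
    & (u * u) ^+ 2 + 1 + -1 * (u ^+ 2 * 2) != 0].
Proof.
move=> u_gt1.
have uu_gt0 : 0 < u * u - 1 by nra.
have -> : (u * u) ^+ 2 - 1 = (u * u - 1) * (u * u - 1 + 2) by ring.
have -> : (u * u) ^+ 2 + 1 + -1 * (u ^+ 2 * 2) = (u * u - 1) ^+ 2 by ring.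
by rewrite !gt_eqF ?mulr_gt0 ?exprn_gt0 //; lra.
Qed.

Lemma ch_gt1 u : 1 < u -> 1 < ch u.
Proof.
move=> u_gt1; have u_gt0 : 0 < u by lra.
have -> : ch u = 1 + (u ^+ 2 - 1) ^+ 2 / (2 * u ^+ 2).
  by rewrite /ch; field; rewrite gt_eqF.
by rewrite ltrDl divr_gt0 ?mulr_gt0 ?exprn_gt0 //; nra.
Qed.

Lemma sh_gt0 u : 1 < u -> 0 < sh u.
Proof.
move=> u_gt1; have u_gt0 : 0 < u by lra.
have -> : sh u = (u ^+ 4 - 1) / (2 * u ^+ 2) by rewrite /sh; field; rewrite gt_eqF.
by rewrite divr_gt0 ?mulr_gt0 ?exprn_gt0 // subr_gt0 exprn_egt1.
Qed.

Lemma expR_half_sqr l : expR (l / 2) ^+ 2 = expR l.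
Proof. by rewrite -expRM_natl; congr expR; field. Qed.

Lemma cosh_ch l : cosh l = ch (expR (l / 2)).
Proof. by rewrite /ch expR_half_sqr cosh_expRV. Qed.

Lemma sinh_sh l : sinh l = sh (expR (l / 2)).
Proof. by rewrite /sh expR_half_sqr sinh_expRV. Qed.

Lemma new_length_half (l0 : R) wa wb :
  new_length l0 wa wb / 2 = acosh (expR (wa + wb) * cosh (l0 / 2)).
Proof. by rewrite /new_length; field. Qed.

Lemma new_length_gt1 (l0 : R) wa wb : 1 < expR (wa + wb) * cosh (l0 / 2) ->
  1 < expR (new_length l0 wa wb / 2).
Proof. by move=> z_gt1; rewrite new_length_half; case: (expR_acosh z_gt1). Qed.

Lemma new_length_gt0 (l0 : R) wa wb : 1 < expR (wa + wb) * cosh (l0 / 2) ->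
  0 < new_length l0 wa wb.
Proof.
move/new_length_gt1; rewrite -expR0 ltr_expR.
by rewrite pmulr_lgt0 // invr_gt0.
Qed.

Lemma is_derive_new_length (l0 : R) p q t dp dq :
  is_derive t 1 p dp -> is_derive t 1 q dq ->
  1 < expR (p t + q t) * cosh (l0 / 2) ->
  is_derive t 1 (fun x => new_length l0 (p x) (q x))
    (len_deriv (expR (new_length l0 (p t) (q t) / 2)) (dp + dq)).
Proof.
move=> dp_t dq_t z_gt1.
have dz := is_derive1M (is_derive1_chain (is_derive_expR _) (is_derive1D dp_t dq_t))
  (is_derive_cst (cosh (l0 / 2)) t 1).
have := is_derive1M (is_derive_cst (2 : R) t 1)
  (@is_derive1_chain _ (@acosh R) _ t _ _ (is_derive_acosh z_gt1) dz).
move/is_derive_eq; apply => /=.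
rewrite new_length_half; have [u_gt1 zE rE] := expR_acosh z_gt1.
set u := expR (acosh _) in u_gt1 zE rE *.
rewrite rE !mulr0 !addr0 add0r [cosh _ * _]mulrA [cosh _ * _]mulrC zE /len_deriv.
by field; case/and4P: (param_neq0 u_gt1) => -> -> _ _.
Qed.

End EdgeLength.

Section HexagonCosineLaw.
Variable R : realType.
Implicit Types (a b c : R -> R) (t : R).

Definition cosine_law (xa xb xc sb sc : R) := (xb * xc + xa) / (sb * sc).

(* [x] stands for [cosh], [s] for [sinh] and [d] for the derivatives of the side lengths *)
Definition cosine_law_deriv (xa sa xb sb xc sc da db dc : R) :=
  ((sb * db * xc + xb * (sc * dc) + sa * da) * (sb * sc)
   - (xb * xc + xa) * (xb * db * sc + sb * (xc * dc))) / (sb * sc) ^+ 2.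

Lemma cosine_law_gt1 (a b c : R) : 0 < a -> 0 < b -> 0 < c ->
  1 < cosine_law (cosh a) (cosh b) (cosh c) (sinh b) (sinh c).
Proof.
move=> /cosh_sinh_gt[ch_a _ _] /cosh_sinh_gt[ch_b sh_b sh_ch_b].
move=> /cosh_sinh_gt[ch_c sh_c sh_ch_c].
rewrite /cosine_law ltr_pdivlMr; last exact: mulr_gt0.
rewrite mul1r.
have : sinh b * sinh c < cosh b * cosh c.
  apply: (@lt_trans _ _ (sinh b * cosh c)); first by rewrite ltr_pM2l.
  by rewrite ltr_pM2r // (lt_trans ltr01).
lra.
Qed.

Lemma is_derive_hexagon_opp a b c t da db dc :
  is_derive t 1 a da -> is_derive t 1 b db -> is_derive t 1 c dc ->
  0 < a t -> 0 < b t -> 0 < c t ->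
  is_derive t 1 (fun x => hexagon_opp (a x) (b x) (c x))
    (cosine_law_deriv (cosh (a t)) (sinh (a t)) (cosh (b t)) (sinh (b t))
                      (cosh (c t)) (sinh (c t)) da db dc
     / Num.sqrt (cosine_law (cosh (a t)) (cosh (b t)) (cosh (c t))
                            (sinh (b t)) (sinh (c t)) ^+ 2 - 1)).
Proof.
move=> da_t db_t dc_t a_gt0 b_gt0 c_gt0.
have dcosh f df : is_derive t 1 f df -> is_derive t 1 (fun x => cosh (f x)) (sinh (f t) * df).
  exact: (@is_derive1_chain _ (@cosh R) f t _ _ (is_derive_cosh (f t))).
have dsinh f df : is_derive t 1 f df -> is_derive t 1 (fun x => sinh (f x)) (cosh (f t) * df).
  exact: (@is_derive1_chain _ (@sinh R) f t _ _ (is_derive_sinh (f t))).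
have [_ sh_b _] := cosh_sinh_gt b_gt0; have [_ sh_c _] := cosh_sinh_gt c_gt0.
have shbc_neq0 : sinh (b t) * sinh (c t) != 0 by rewrite gt_eqF // mulr_gt0.
have G_gt1 := cosine_law_gt1 a_gt0 b_gt0 c_gt0.
have dG := is_derive1M
  (is_derive1D (is_derive1M (dcosh _ _ db_t) (dcosh _ _ dc_t)) (dcosh _ _ da_t))
  (is_derive1V (is_derive1M (dsinh _ _ db_t) (dsinh _ _ dc_t)) shbc_neq0).
have := @is_derive1_chain _ (@acosh R) _ t _ _ (is_derive_acosh G_gt1) dG.
move/is_derive_eq; apply => /=.
have : 0 < Num.sqrt (cosine_law (cosh (a t)) (cosh (b t)) (cosh (c t))
                                 (sinh (b t)) (sinh (c t)) ^+ 2 - 1).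
  by rewrite sqrtr_gt0 sqr_sub1_gt0.
rewrite /cosine_law_deriv /cosine_law => sq_gt0.
by field; rewrite !gt_eqF.
Qed.

End HexagonCosineLaw.

Section HexagonParam.
Variable R : realType.

Lemma sqrt_cosine_law (ua ub uc : R) : 1 < ua -> 1 < ub -> 1 < uc ->
  Num.sqrt (cosine_law (ch ua) (ch ub) (ch uc) (sh ub) (sh uc) ^+ 2 - 1)
  = Num.sqrt (hex_disc (ch ua) (ch ub) (ch uc)) / (sh ub * sh uc).
Proof.
move=> ua_gt1 ub_gt1 uc_gt1.
have shbc_gt0 : 0 < sh ub * sh uc by rewrite mulr_gt0 ?sh_gt0.
have -> : cosine_law (ch ua) (ch ub) (ch uc) (sh ub) (sh uc) ^+ 2 - 1
    = hex_disc (ch ua) (ch ub) (ch uc) * ((sh ub * sh uc)^-1) ^+ 2.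
  rewrite /cosine_law /hex_disc /ch /sh; field.
  case/and4P: (param_neq0 ua_gt1) => -> _ _ _.
  case/and4P: (param_neq0 ub_gt1) => -> _ -> _.
  by case/and4P: (param_neq0 uc_gt1) => -> _ -> _.
have D_ge0 : 0 <= hex_disc (ch ua) (ch ub) (ch uc) by rewrite ltW // hex_disc_gt0 ?ch_gt1.
by rewrite sqrtrM // sqrtr_sqr ger0_norm // invr_ge0 ltW.
Qed.

Lemma cosine_law_deriv_param (ua ub uc s va vb vc : R) :
  1 < ua -> 1 < ub -> 1 < uc -> 0 < s ->
  cosine_law_deriv (ch ua) (sh ua) (ch ub) (sh ub) (ch uc) (sh uc)
      (len_deriv ua (vb + vc)) (len_deriv ub (vc + va)) (len_deriv uc (va + vb))
    / (s / (sh ub * sh uc))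
  = - (2 / s) * hex_row (ch ua) (ch ub) (ch uc) va vb vc.
Proof.
move=> ua_gt1 ub_gt1 uc_gt1 s_gt0.
rewrite /cosine_law_deriv /ch /sh /len_deriv /hex_row /hex_diag /hex_off.
field.
move: (param_neq0 ua_gt1) (param_neq0 ub_gt1) (param_neq0 uc_gt1).
by move=> /and4P[-> -> _ _] /and4P[-> -> -> ->] /and4P[-> -> -> ->]; rewrite gt_eqF.
Qed.

End HexagonParam.

Section DirectionalDerivative.
Variables (R : realType) (V W : normedModType R).

Lemma derive_along_line (f : V -> W) (x v : V) :
  'D_v f x = 'D_1 (fun h : R => f (h *: v + x)) 0.
Proof.
rewrite /derive; set g1 := fun h => h^-1 *: _; set g2 := fun h => h^-1 *: _.
suff -> : g1 = g2 by [].
by apply/funext => h; rewrite /g1 /g2 /= addr0 scale0r add0r [_%:A]mulr1.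
Qed.

End DirectionalDerivative.

Section DifferentiableRules.
Variables (R : realType) (V : normedModType R).
Implicit Types (f g : V -> R) (x : V).

Lemma differentiable_add_fun f g x : differentiable f x -> differentiable g x ->
  differentiable (fun y => f y + g y) x.
Proof. exact: differentiableD. Qed.

Lemma differentiable_mul_fun f g x : differentiable f x -> differentiable g x ->
  differentiable (fun y => f y * g y) x.
Proof. exact: differentiableM. Qed.

Lemma differentiable_inv_fun f x : differentiable f x -> f x != 0 ->
  differentiable (fun y => (f y)^-1) x.
Proof. exact: differentiableV. Qed.

Lemma differentiable_comp_real (h : R -> R) f x :
  differentiable f x -> derivable h (f x) 1 -> differentiable (fun y => h (f y)) x.
Proof.
by move=> df /derivable1_diffP dh; exact: (differentiable_comp df dh).
Qed.

End DifferentiableRules.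

Section RowFunctions.
Variable R : realType.

Lemma differentiable_rV n (V : normedModType R) (f : V -> 'rV[R]_n) (x : V) :
  (forall j, differentiable (fun y => f y 0 j) x) -> differentiable f x.
Proof.
move=> df; have -> : f = \sum_(j < n) (fun y => f y 0 j *: delta_mx 0 j).
  by apply/funext => y; rewrite [LHS]row_sum_delta fct_sumE.
by apply: differentiable_sum => j; exact: differentiableZl.
Qed.

Lemma jacobian_mul_coord m n (f : 'rV[R]_m -> 'rV[R]_n) (a v : 'rV[R]_m) j :
  differentiable f a -> (v *m 'J f a) 0 j = 'D_v (fun y => f y 0 j) a.
Proof.
by move=> df; rewrite -deriveEjacobian // derive_mx ?mxE //; exact: diff_derivable.
Qed.

Lemma jacobian_coord m n (f : 'rV[R]_m -> 'rV[R]_n) (a : 'rV[R]_m) i j :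
  differentiable f a -> 'J f a i j = 'D_(delta_mx 0 i) (fun y => f y 0 j) a.
Proof. by move=> df; rewrite -jacobian_mul_coord // -rowE [RHS]mxE. Qed.

Lemma jacobian_form m (f : 'rV[R]_m -> 'rV[R]_m) (a v : 'rV[R]_m) :
  differentiable f a ->
  (v *m 'J f a *m v^T) 0 0 = \sum_(j < m) 'D_v (fun y => f y 0 j) a * v 0 j.
Proof.
by move=> df; rewrite mxE; apply: eq_bigr => j _; rewrite jacobian_mul_coord // mxE.
Qed.

End RowFunctions.

Section Theta.
Variables (R : realType) (n : nat).
Local Notation V := 'rV[R]_n.

Definition theta (ljk lki lij : R) (i j k : 'I_n) (w : V) : R :=
  hexagon_opp (new_length ljk (w 0 j) (w 0 k)) (new_length lki (w 0 k) (w 0 i))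
              (new_length lij (w 0 i) (w 0 j)).

Lemma differentiable_hexagon_opp (a b c : V -> R) (w : V) :
  differentiable a w -> differentiable b w -> differentiable c w ->
  0 < a w -> 0 < b w -> 0 < c w ->
  differentiable (fun y => hexagon_opp (a y) (b y) (c y)) w.
Proof.
move=> da db dc a_gt0 b_gt0 c_gt0.
have [_ sh_b _] := cosh_sinh_gt b_gt0; have [_ sh_c _] := cosh_sinh_gt c_gt0.
apply: differentiable_comp_real; last exact/ex_derive/is_derive_acosh/cosine_law_gt1.
have dcosh (f : V -> R) : differentiable f w -> differentiable (fun y => cosh (f y)) w.
  by move=> df; apply: differentiable_comp_real => //; exact: ex_derive (is_derive_cosh _).
have dsinh (f : V -> R) : differentiable f w -> differentiable (fun y => sinh (f y)) w.
  by move=> df; apply: differentiable_comp_real => //; exact: ex_derive (is_derive_sinh _).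
apply: differentiable_mul_fun.
  by apply: differentiable_add_fun; [apply: differentiable_mul_fun|]; exact: dcosh.
apply: differentiable_inv_fun; last by rewrite gt_eqF // mulr_gt0.
by apply: differentiable_mul_fun; exact: dsinh.
Qed.

Lemma differentiable_new_length (l0 : R) (a b : 'I_n) (w : V) :
  1 < expR (w 0 a + w 0 b) * cosh (l0 / 2) ->
  differentiable (fun y : V => new_length l0 (y 0 a) (y 0 b)) w.
Proof.
move=> z_gt1; apply: differentiable_mul_fun; first exact: differentiable_cst.
apply: differentiable_comp_real; last exact/ex_derive/is_derive_acosh.
apply: differentiable_mul_fun; last exact: differentiable_cst.
apply: differentiable_comp_real; last exact: derivable_expR.
by apply: differentiable_add_fun; exact: differentiable_coord.
Qed.

Lemma differentiable_theta (ljk lki lij : R) (i j k : 'I_n) (w : V) :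
  1 < expR (w 0 j + w 0 k) * cosh (ljk / 2) ->
  1 < expR (w 0 k + w 0 i) * cosh (lki / 2) ->
  1 < expR (w 0 i + w 0 j) * cosh (lij / 2) ->
  differentiable (theta ljk lki lij i j k) w.
Proof.
move=> z_jk z_ki z_ij.
by apply: differentiable_hexagon_opp; rewrite ?new_length_gt0 //;
  apply: differentiable_new_length.
Qed.

Lemma derive_theta (ljk lki lij : R) (i j k : 'I_n) (w v : V) :
  1 < expR (w 0 j + w 0 k) * cosh (ljk / 2) ->
  1 < expR (w 0 k + w 0 i) * cosh (lki / 2) ->
  1 < expR (w 0 i + w 0 j) * cosh (lij / 2) ->
  let xa := cosh (new_length ljk (w 0 j) (w 0 k)) in
  let xb := cosh (new_length lki (w 0 k) (w 0 i)) in
  let xc := cosh (new_length lij (w 0 i) (w 0 j)) in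
  'D_v (theta ljk lki lij i j k) w
  = - (2 / Num.sqrt (hex_disc xa xb xc)) * hex_row xa xb xc (v 0 i) (v 0 j) (v 0 k).
Proof.
move=> z_jk z_ki z_ij xa xb xc.
pose line (a : 'I_n) (h : R) := h * v 0 a + w 0 a.
have line0 (a : 'I_n) : line a 0 = w 0 a by rewrite /line mul0r add0r.
have dline a := is_derive_affine (v 0 a) (w 0 a) 0.
have dlen (l0 : R) (a b : 'I_n) : 1 < expR (w 0 a + w 0 b) * cosh (l0 / 2) ->
    is_derive (0 : R) 1 (fun h => new_length l0 (line a h) (line b h))
      (len_deriv (expR (new_length l0 (w 0 a) (w 0 b) / 2)) (v 0 a + v 0 b)).
  move=> z_ab; have := is_derive_new_length (l0 := l0) (dline a) (dline b).
  by rewrite /= !mul0r !add0r; apply.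
have len_gt0 (l0 : R) (a b : 'I_n) : 1 < expR (w 0 a + w 0 b) * cosh (l0 / 2) ->
    0 < new_length l0 (line a 0) (line b 0).
  by rewrite !line0; exact: new_length_gt0.
rewrite derive_along_line.
have -> : (fun h => theta ljk lki lij i j k (h *: v + w)) = fun h =>
    hexagon_opp (new_length ljk (line j h) (line k h)) (new_length lki (line k h) (line i h))
                (new_length lij (line i h) (line j h)).
  by apply/funext => h; rewrite /theta !mxE.
have [_ ->] := is_derive_hexagon_opp (dlen _ _ _ z_jk) (dlen _ _ _ z_ki) (dlen _ _ _ z_ij)
  (len_gt0 _ _ _ z_jk) (len_gt0 _ _ _ z_ki) (len_gt0 _ _ _ z_ij).
rewrite /= !line0.
rewrite /xa /xb /xc ![cosh (new_length _ _ _)]cosh_ch ![sinh (new_length _ _ _)]sinh_sh.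
have ua_gt1 := new_length_gt1 z_jk; have ub_gt1 := new_length_gt1 z_ki.
have uc_gt1 := new_length_gt1 z_ij.
rewrite sqrt_cosine_law // cosine_law_deriv_param // sqrtr_gt0.
by rewrite hex_disc_gt0 // ch_gt1.
Qed.

End Theta.

Section Ord3.
Variable R : realType.

Lemma ord3P (i : 'I_3) : [\/ i = 0, i = 1 | i = 2].
Proof.
case: i => -[|[|[|//]]] i_lt3; [constructor 1 | constructor 2 | constructor 3];
  exact/val_inj.
Qed.

Lemma sum_ord3 (F : 'I_3 -> R) : \sum_(i < 3) F i = F 0 + F 1 + F 2.
Proof.
by rewrite !big_ord_recl big_ord0 addr0 addrA; congr (_ + F _ + F _); apply/val_inj.
Qed.

Lemma rV3_neq0 (v : 'rV[R]_3) : v != 0 -> [|| v 0 0 != 0, v 0 1 != 0 | v 0 2 != 0].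
Proof.
apply: contraNT; rewrite !negb_or !negbK => /and3P[/eqP v0 /eqP v1 /eqP v2].
by apply/eqP/rowP => j; rewrite mxE; case: (ord3P j) => ->.
Qed.

End Ord3.

Section ThetaMap.
Variables (R : realType) (l0jk l0ki l0ij : R).
Local Notation th := (theta_map l0jk l0ki l0ij).

Lemma theta_map_coord :
  [/\ (fun w => th w 0 0) = theta l0jk l0ki l0ij 0 1 2,
      (fun w => th w 0 1) = theta l0ki l0ij l0jk 1 2 0
    & (fun w => th w 0 2) = theta l0ij l0jk l0ki 2 0 1].
Proof. by split; apply/funext => w; rewrite mxE. Qed.

Lemma W_ijk_admissible (w : 'rV[R]_3) : w \in W_ijk l0jk l0ki l0ij ->
  [/\ 1 < expR (w 0 1 + w 0 2) * cosh (l0jk / 2),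
      1 < expR (w 0 2 + w 0 0) * cosh (l0ki / 2)
    & 1 < expR (w 0 0 + w 0 1) * cosh (l0ij / 2)].
Proof.
have cosh_half_gt1 (z : R) : (exists l, 0 < l /\ cosh (l / 2) = z) -> 1 < z.
  by move=> [l [l_gt0 <-]]; have [] // := @cosh_sinh_gt R (l / 2); rewrite divr_gt0.
by rewrite inE => -[/cosh_half_gt1 ? [/cosh_half_gt1 ? /cosh_half_gt1 ?]].
Qed.

Section Admissible.
Variable w : 'rV[R]_3.
Hypotheses (z_jk : 1 < expR (w 0 1 + w 0 2) * cosh (l0jk / 2))
           (z_ki : 1 < expR (w 0 2 + w 0 0) * cosh (l0ki / 2))
           (z_ij : 1 < expR (w 0 0 + w 0 1) * cosh (l0ij / 2)).

Lemma differentiable_theta_map : differentiable th w.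
Proof.
have [th0 th1 th2] := theta_map_coord.
apply: differentiable_rV => a.
by case: (ord3P a) => ->; rewrite ?th0 ?th1 ?th2; apply: differentiable_theta.
Qed.

Lemma derive_theta_map : exists x0 x1 x2 c : R,
  [/\ 1 < x0, 1 < x1, 1 < x2, c < 0 &
      forall v : 'rV[R]_3,
      [/\ 'D_v (fun y => th y 0 0) w = c * hex_row x0 x1 x2 (v 0 0) (v 0 1) (v 0 2),
          'D_v (fun y => th y 0 1) w = c * hex_row x1 x2 x0 (v 0 1) (v 0 2) (v 0 0)
        & 'D_v (fun y => th y 0 2) w = c * hex_row x2 x0 x1 (v 0 2) (v 0 0) (v 0 1)]].
Proof.
have cosh_gt1 (l0 : R) (a b : 'I_3) : 1 < expR (w 0 a + w 0 b) * cosh (l0 / 2) ->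
    1 < cosh (new_length l0 (w 0 a) (w 0 b)).
  by move/new_length_gt0/cosh_sinh_gt => [].
have [-> -> ->] := theta_map_coord.
have D0 v := derive_theta v z_jk z_ki z_ij.
have D1 v := derive_theta v z_ki z_ij z_jk.
have D2 v := derive_theta v z_ij z_jk z_ki.
move: D0 D1 D2 (cosh_gt1 _ _ _ z_jk) (cosh_gt1 _ _ _ z_ki) (cosh_gt1 _ _ _ z_ij).
move: (cosh (new_length l0jk _ _)) (cosh (new_length l0ki _ _)) (cosh (new_length l0ij _ _)).
(* the [cosh] terms are generalized so that no conversion ever unfolds them *)
move=> x0 x1 x2 D0 D1 D2 x0_gt1 x1_gt1 x2_gt1; rewrite /= in D0 D1 D2.
exists x0, x1, x2, (- (2 / Num.sqrt (hex_disc x0 x1 x2))).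
split; [exact: x0_gt1 | exact: x1_gt1 | exact: x2_gt1 | | move=> v].
  by rewrite oppr_lt0 divr_gt0 // sqrtr_gt0 hex_disc_gt0.
rewrite (hex_discC x0 x1 x2) in D1.
rewrite (hex_discC x1 x2 x0) (hex_discC x0 x1 x2) in D2.
by split; [exact: D0 | exact: D1 | exact: D2].
Qed.

End Admissible.

End ThetaMap.

Theorem lemma3 (R : realType) (l0jk l0ki l0ij : R) :
  0 < l0jk -> 0 < l0ki -> 0 < l0ij ->
  forall w : 'rV[R]_3, w \in W_ijk l0jk l0ki l0ij ->
    differentiable (theta_map l0jk l0ki l0ij) w /\
    negative_definite ('J (theta_map l0jk l0ki l0ij) w).
Proof.
move=> _ _ _ w /W_ijk_admissible[z_jk z_ki z_ij].
have dth := differentiable_theta_map z_jk z_ki z_ij.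
have [x0 [x1 [x2 [c [x0_gt1 x1_gt1 x2_gt1 c_lt0 Dth]]]]] :=
  derive_theta_map z_jk z_ki z_ij.
split; first exact: dth.
split.
  apply/matrixP => i j; rewrite [LHS]mxE !jacobian_coord; try exact: dth.
  have [a0 a1 a2] := Dth (delta_mx 0 0); have [b0 b1 b2] := Dth (delta_mx 0 1).
  have [c0 c1 c2] := Dth (delta_mx 0 2).
  by case: (ord3P i) => ->; case: (ord3P j) => ->;
    rewrite ?(a0, a1, a2, b0, b1, b2, c0, c1, c2) /hex_row /hex_off !mxE /=; ring.
move=> v /rV3_neq0 v_neq0; rewrite jacobian_form; last exact: dth.
rewrite sum_ord3; have [-> -> ->] := Dth v.
rewrite (_ : _ + _ + _ = c * hex_form x0 x1 x2 (v 0 0) (v 0 1) (v 0 2)); last first.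
  by rewrite /hex_form; ring.
by rewrite nmulr_rlt0 // hex_form_gt0.
Qed.
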